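(* Consider the multi-hop control network closed loop described in the context, with plant, graphs, scheduling (hence all path delays), the integers $n,r,m,s$ and the step amplitude $A$ fixed. There exists a polynomial $Q$ in the entries of $\mathbf d=(d_s,\dots,d_0)$ and $\mathbf w_R=(W_R(e))_{e\in E_R}$, with coefficients depending only on the fixed data, such that for every choice of $(\mathbf c,\mathbf d,\mathbf w_R,\mathbf w_O)$ for which the closed loop satisfies the deadbeat identity $$D_C(z)D_{P'}(z)+N_{C'}(z)N_{G_R}(z)N_P(z)N_{G_O}(z)=z^{l},\qquad l=m+r+1,$$ and the step response has zero steady-state error ($e(k)\to 0$), the quadratic $\ell_2$ norm of the error satisfies $$\|e\|_{\mathcal L_2}^2=\sum_{k\ge 0}e(k)^2=Q(\mathbf d,\mathbf w_R).$$
   Context: Plant: a discrete-time SISO transfer function $P(z)=\dfrac{N_P(z)}{M(z)D_{P'}(z)}$ with $N_P(z)=b_{n-1}z^{n-1}+\dots+b_0$, $D_{P'}(z)=z^r+a_{r-1}z^{r-1}+\dots+a_0$, $M(z)$ a monic polynomial, and $r+\deg M=n$. Controllability network: an acyclic directed graph $(V_R,E_R)$ with a controller node $v_c$ and an actuator node $v_u$, a weight function $W_R:E_R\to\mathbb R$, and a fixed periodic scheduling that assigns to every directed path $\rho$ from $v_c$ to $v_u$ a delay $d(\rho)\in\mathbb N$. Let $\chi_R(d)$ be the set of such paths of delay $d$, $D_R$ the finite set of delays that occur, $\bar D_R=\max D_R$, $W_R(\rho)$ the product of the weights of the edges of $\rho$, $\gamma_R(d)=\sum_{\rho\in\chi_R(d)}W_R(\rho)$,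 $N_{G_R}(z)=\sum_{d\in D_R}\gamma_R(d)z^{\bar D_R-d}$ and $G_R(z)=N_{G_R}(z)/z^{\bar D_R}$. The observability network is defined analogously (acyclic graph $(V_O,E_O)$ with paths from the sensor node to $v_c$, weights $W_O$, delay set $D_O$, $\bar D_O=\max D_O$, coefficients $\gamma_O$, $N_{G_O}(z)=\sum_{d\in D_O}\gamma_O(d)z^{\bar D_O-d}$, $G_O(z)=N_{G_O}(z)/z^{\bar D_O}$). Controller: $C(z)=M(z)z^{\bar D_R}z^{\bar D_O}C'(z)$, $C'(z)=N_{C'}(z)/D_C(z)$ with $N_{C'}(z)=d_sz^s+\dots+d_0$, $D_C(z)=(z-1)(z^m+c_{m-1}z^{m-1}+\dots+c_0)$, where $m+1=s+\deg M+\bar D_R+\bar D_O$; decision vectors $\mathbf c=(c_{m-1},\dots,c_0)$, $\mathbf d=(d_s,\dots,d_0)$, $\mathbf w_R=(W_R(e))_{e\in E_R}$, $\mathbf w_O=(W_O(e))_{e\in E_O}$. Closed loop: with reference $r(k)=A$ for $k\ge0$ (Z-transform $R(z)=Az/(z-1)$), the plant output has Z-transform $Y(z)=\dfrac{C(z)G_R(z)P(z)}{1+C(z)G_R(z)P(z)G_O(z)}R(z)$, and the error is $e(k)=y(k)-r(k)$. *)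

From HB Require Import structures.
From mathcomp Require Import all_boot all_order all_algebra.
From mathcomp Require Import fraction.
From mathcomp Require Import mpoly.
From mathcomp Require Import reals.
Set Implicit Arguments. Unset Strict Implicit. Unset Printing Implicit Defensive.
Import Order.TTheory GRing.Theory Num.Theory.
Local Open Scope ring_scope.

Section Graph.
Variables (V : eqType) (E : finType) (src tgt : E -> V).

Definition is_walk (v0 v1 : V) (s : seq E) : bool :=
  if s is e :: s' then
    [&& src e == v0, path (fun e f => tgt e == src f) e s' & tgt (last e s') == v1]
  else v0 == v1.

Definition acyclic : Prop := forall v (s : seq E), s != [::] -> ~~ is_walk v v s.

Definition all_seqs (k : nat) : seq (seq E) :=
  flatten [seq [seq tval t | t : i.-tuple E] | i <- iota 0 k.+1].

(* in an acyclic graph every directed path has at most #|E| edges, so this is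
   the (duplicate-free) list of all directed paths from v0 to v1 *)
Definition paths (v0 v1 : V) : seq (seq E) :=
  [seq p <- all_seqs #|E| | is_walk v0 v1 p].

Variables (v0 v1 : V) (delay : seq E -> nat).

Definition delays : seq nat := undup [seq delay p | p <- paths v0 v1].
Definition Dbar : nat := \max_(d <- delays) d.

Variable R : comNzRingType.
Definition pathW (w : E -> R) (p : seq E) : R := \prod_(e <- p) w e.
Definition gamma (w : E -> R) (d : nat) : R :=
  \sum_(p <- paths v0 v1 | delay p == d) pathW w p.
Definition NG (w : E -> R) : {poly R} :=
  \sum_(d <- delays) gamma w d *: 'X^(Dbar - d).
End Graph.

Notation "x %:F" := (@FracField.tofrac _ x).
Section ZTrans.
Variable R : idomainType.
Definition hz (h : nat -> R) (k : int) : R :=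
  if k is Posz k' then h k' else 0.
Definition coefZ (N : {poly R}) (p : int) : R :=
  if p is Posz p' then N`_p' else 0.
(* [h] is the causal sequence whose Z-transform  sum_k h k z^-k  equals the
   rational function F, i.e. for some representation F = N/D (D <> 0) the
   formal Laurent series identity  D(z) * sum_k h(k) z^-k = N(z)  holds
   (coefficient of z^p, for every integer p). *)
Definition zinv (F : {fraction {poly R}}) (h : nat -> R) : Prop :=
  exists N D : {poly R}, D != 0 /\ F = N%:F / D%:F /\
    forall p : int, \sum_(i < size D) D`_i * hz h (i%:Z - p) = coefZ N p.
End ZTrans.

Definition seq_cvg_to (R : realFieldType) (u : nat -> R) (l : R) : Prop :=
  forall eps : R, 0 < eps -> exists N : nat, forall k, (N <= k)%N -> `|u k - l| < eps.
Definition series_to (R : realFieldType) (u : nat -> R) (l : R) : Prop :=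
  seq_cvg_to (fun K => \sum_(k < K) u k) l.

Definition degp (R : nzRingType) (p : {poly R}) : nat := (size p).-1.

Definition NCp (R : comNzRingType) (s : nat) (d : 'I_s.+1 -> R) : {poly R} :=
  \sum_(i < s.+1) d i *: 'X^i.
Definition DC (R : comNzRingType) (m : nat) (c : 'I_m -> R) : {poly R} :=
  ('X - 1) * ('X^m + \sum_(i < m) c i *: 'X^i).

Definition dw_vec (R : Type) (s : nat) (E : finType) (d : 'I_s.+1 -> R) (w : E -> R)
  : 'I_(s.+1 + #|E|) -> R :=
  fun i => match split i with inl j => d j | inr j => w (enum_val j) end.

Definition closed_loop_Y (R : idomainType) (A : R)
  (NP M DPp NCp' DCp NGR NGO : {poly R}) (DR DO : nat) : {fraction {poly R}} :=
  let P  := NP%:F / (M * DPp)%:F in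
  let C  := (M * 'X^DR * 'X^DO)%:F * (NCp'%:F / DCp%:F) in
  let GR := NGR%:F / ('X^DR)%:F in
  let GO := NGO%:F / ('X^DO)%:F in
  let Rz := (A *: 'X)%:F / ('X - 1)%:F in
  (C * GR * P) / (1 + C * GR * P * GO) * Rz.

(* Under the deadbeat identity the loop gain has characteristic polynomial
   [z^l], and the closed loop collapses to
     Y(z) = A z^(D_O + 1) N_C'(z) N_GR(z) N_P(z) / (z^l (z - 1)),
   in which neither [c] nor [w_O] survives.  Hence [y (k + 1) - y k] is the
   coefficient of [z^(l - k)] of that numerator: [y] is a partial sum of
   coefficients, constant from step [l + 1] on, and zero steady-state error
   forces this constant to be [A].  So [e] vanishes after step [l] and
   [||e||^2] is the finite sum of [(y k - A)^2], [k <= l], which is a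
   polynomial in [d] and [w_R]. *)

From Pilot Require Import Defs.
From mathcomp Require Import all_boot all_order all_algebra.
From mathcomp Require Import fraction mpoly reals.
From mathcomp Require Import zify ring.
Import Order.TTheory GRing.Theory Num.Theory.
Local Open Scope ring_scope.
Set Implicit Arguments. Unset Strict Implicit. Unset Printing Implicit Defensive.

Section Convolution.
Variable R : idomainType.
Implicit Types (D E N : {poly R}) (g : int -> R).

(* [conv D g p] is the coefficient of [z^p] in [D(z) * sum_q g q z^q], and
   [zseq h q] that of [z^q] in [sum_k h k z^-k]. *)
Definition conv D g (p : int) : R := \sum_(i < size D) D`_i * g (p - i%:Z).

Definition zseq (h : nat -> R) (q : int) : R := hz h (- q).

Lemma conv_widen D g p n : (size D <= n)%N ->
  conv D g p = \sum_(i < n) D`_i * g (p - i%:Z).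
Proof.
move=> leDn; rewrite /conv (big_ord_widen n (fun i => D`_i * g (p - i%:Z)) leDn).
rewrite big_mkcond; apply: eq_bigr => i _; case: ifP => // /negbT.
by rewrite -leqNgt => leDi; rewrite nth_default // mul0r.
Qed.

Lemma convDl D E g p : conv (D + E) g p = conv D g p + conv E g p.
Proof.
set n := maxn (size D) (size E).
rewrite (@conv_widen (D + E) g p n) ?size_polyD //.
rewrite (@conv_widen D g p n) ?leq_maxl // (@conv_widen E g p n) ?leq_maxr //.
by rewrite -big_split; apply: eq_bigr => i _; rewrite coefD mulrDl.
Qed.

Lemma convBr D g1 g2 p :
  conv D (fun q => g1 q - g2 q) p = conv D g1 p - conv D g2 p.
Proof. by rewrite /conv -sumrB; apply: eq_bigr => i _; rewrite mulrBr. Qed.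

Lemma conv_polyC c g p : conv c%:P g p = c * g p.
Proof.
by rewrite (@conv_widen _ g p 1) ?size_polyC ?leq_b1 // big_ord1 coefC subr0.
Qed.

Lemma conv_mulCl c D g p : conv (c%:P * D) g p = c * conv D g p.
Proof.
rewrite (@conv_widen _ g p (size D)); last by rewrite mul_polyC size_scale_leq.
rewrite /conv mulr_sumr; apply: eq_bigr => i _.
by rewrite mul_polyC poly.coefZ mulrA.
Qed.

Lemma conv_mulXl D g p : conv ('X * D) g p = conv D g (p - 1).
Proof.
rewrite (@conv_widen _ g p (size D).+1); last first.
  have [->|nzD] := eqVneq D 0; first by rewrite mulr0 size_poly0.
  by rewrite mulrC size_mulX.
rewrite (mulrC 'X D) big_ord_recl coefMX eqxx mul0r add0r /conv.
by apply: eq_bigr => i _; rewrite coefMX /= /bump /=; congr (_ * g _); lia.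
Qed.

Lemma conv_mulXnl l D g p : conv ('X^l * D) g p = conv D g (p - l%:Z).
Proof.
elim: l p => [|l IHl] p; first by rewrite expr0 mul1r subr0.
by rewrite exprS -mulrA conv_mulXl IHl; congr (conv _ _ _); lia.
Qed.

Lemma conv_XsubC1 g p : conv ('X - 1) g p = g (p - 1) - g p.
Proof.
have -> : ('X - 1 : {poly R}) = 'X * 1 + (-1)%:P by rewrite mulr1 polyCN polyC1.
by rewrite convDl conv_polyC conv_mulXl -polyC1 conv_polyC !mul1r mulN1r.
Qed.

Lemma conv_mul D E g p : conv (D * E) g p = conv D (conv E g) p.
Proof.
elim/poly_ind: D p => [|D c IHD] p; first by rewrite mul0r /conv size_poly0 !big_ord0.
rewrite mulrDl !convDl conv_mulCl conv_polyC.
have -> : D * 'X * E = 'X * (D * E) by ring.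
by rewrite conv_mulXl IHD (mulrC D) conv_mulXl.
Qed.

Lemma conv_coefZ D N p : conv D (Defs.coefZ N) p = Defs.coefZ (D * N) p.
Proof.
elim/poly_ind: D p => [|D c IHD] p.
  by rewrite mul0r /conv size_poly0 big_ord0; case: p => //= k; rewrite coef0.
rewrite convDl conv_polyC mulrDl.
have -> : D * 'X * N = 'X * (D * N) by ring.
rewrite (mulrC D) conv_mulXl IHD.
case: p => [[|k]|k] /=.
- by rewrite coefD coefCM coefXM.
- by rewrite coefD coefCM coefXM /= subn1.
- by rewrite mulr0 addr0.
Qed.

Lemma conv_eq0_gt D g P : (forall q, P < q -> g q = 0) ->
  forall p, P + (size D)%:Z < p -> conv D g p = 0.
Proof.
move=> g0 p ltp; apply: big1 => i _; rewrite g0 ?mulr0 //.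
by have := ltn_ord i; lia.
Qed.

(* Descending induction from [P]: [conv D g (q + deg D) = 0] determines [g q]
   through the nonzero leading coefficient of [D]. *)
Lemma conv_eq0 D g P : D != 0 -> (forall q, P < q -> g q = 0) ->
  (forall p, conv D g p = 0) -> forall q, g q = 0.
Proof.
move=> nzD g0 Dg0.
have g0_below k : g (P - k%:Z) = 0.
  elim/ltn_ind: k => k IHk.
  set dD := (size D).-1.
  have szD : size D = dD.+1 by rewrite prednK // size_poly_gt0.
  have := Dg0 (P - k%:Z + dD%:Z); rewrite /conv szD big_ord_recr /=.
  rewrite big1 ?add0r; last first.
    move=> i _; have ltiD := ltn_ord i.
    have [ltk|gek] := ltnP k (dD - i); first by rewrite g0 ?mulr0 //; lia.
    rewrite (_ : P - k%:Z + dD%:Z - i%:Z = P - (k - (dD - i))%N%:Z); last by lia.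
    by rewrite IHk ?mulr0 //; lia.
  rewrite addrK => /eqP; rewrite mulf_eq0 => /orP [|/eqP //].
  have : lead_coef D != 0 by rewrite lead_coef_eq0.
  by rewrite lead_coefE szD /= => /negPf ->.
move=> q; have [/g0 //|leqP] := ltrP P q.
by have -> : q = P - (`|P - q|%N)%:Z by lia.
Qed.

(* The identity defining [zinv] holds for every representation [N / D] of the
   transform, not only for its witness. *)
Lemma zinv_conv N D h : D != 0 -> zinv (N%:F / D%:F) h ->
  forall p, conv D (zseq h) p = Defs.coefZ N p.
Proof.
move=> nzD [N' [D' [nzD' [eqF hD']]]].
have eqND : N * D' = N' * D.
  move/eqP: eqF; rewrite eq_sym eqr_div ?tofrac_eq0 //.
  by rewrite -!tofracM tofrac_eq => /eqP.
have convD' p : conv D' (zseq h) p = Defs.coefZ N' p.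
  by rewrite -hD' /conv; apply: eq_bigr => i _; rewrite /zseq opprB.
move=> p; apply/eqP; rewrite -subr_eq0; apply/eqP; move: p.
apply: (@conv_eq0 D' _ (size D + size N)%N%:Z nzD').
  move=> q ltq; rewrite (@conv_eq0_gt D _ 0); first last.
  - by rewrite add0r; apply: le_lt_trans ltq; rewrite lez_nat leq_addr.
  - by case=> [[|k]|k].
  case: q ltq => k ltk /=; last by rewrite subrr.
  rewrite nth_default ?subrr //; move: ltk; rewrite ltz_nat => /ltnW.
  exact: leq_trans (leq_addl _ _).
move=> p; rewrite convBr -conv_mul mulrC conv_mul.
have -> : conv D (conv D' (zseq h)) p = conv D (Defs.coefZ N') p.
  by apply: eq_bigr => i _; rewrite convD'.
by rewrite !conv_coefZ mulrC -eqND mulrC subrr.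
Qed.

Lemma zinv_deadbeat N l h : zinv (N%:F / ('X^l * ('X - 1))%:F) h ->
  forall k, h k = \sum_(j < k.+1) Defs.coefZ N (l.+1%:Z - j%:Z).
Proof.
move=> hN.
have nzD : ('X^l * ('X - 1) : {poly R}) != 0.
  by rewrite monic_neq0 // monicMl ?monicXn // -polyC1 monicXsubC.
have step p : zseq h (p - l%:Z - 1) - zseq h (p - l%:Z) = Defs.coefZ N p.
  by rewrite -(zinv_conv nzD hN) conv_mulXnl conv_XsubC1.
elim=> [|k IHk].
  have := step l.+1%:Z.
  have -> : l.+1%:Z - l%:Z - 1 = 0 by lia.
  have -> : l.+1%:Z - l%:Z = 1 by lia.
  by rewrite big_ord1 subr0 /zseq /= addn0.
have := step (l%:Z - k%:Z).
have -> : l%:Z - k%:Z - l%:Z - 1 = - k.+1%:Z by lia.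
have -> : l%:Z - k%:Z - l%:Z = - k%:Z by lia.
rewrite /zseq !opprK /= => stepk; rewrite big_ord_recr /= -IHk.
have -> : l.+1%:Z - k.+1%:Z = l%:Z - k%:Z by lia.
by rewrite -stepk addrC subrK.
Qed.

Lemma zinv_deadbeat_settled N l h : zinv (N%:F / ('X^l * ('X - 1))%:F) h ->
  forall t, h (l.+1 + t)%N = h l.+1.
Proof.
move=> hN; elim=> [|t IHt]; first by rewrite addn0.
rewrite -IHt !(zinv_deadbeat hN) addnS big_ord_recr /=.
have -> : l.+1%:Z - (l.+1 + t).+1%:Z = - t.+1%:Z by lia.
by rewrite /= addr0.
Qed.

End Convolution.

Lemma coefZ_map (R S : idomainType) (f : {rmorphism R -> S}) (N : {poly R}) p :
  Defs.coefZ (map_poly f N) p = f (Defs.coefZ N p).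
Proof. by case: p => k /=; rewrite ?coef_map ?rmorph0. Qed.

Lemma seq_cvg_to_eventually_const (R : realFieldType) (u : nat -> R) a K :
  (forall t, u (K + t)%N = u K) -> seq_cvg_to u a -> u K = a.
Proof.
move=> uK ua; apply/eqP; rewrite -subr_eq0; apply/negPn/negP => neq.
have [N uN] : exists N, forall k, (N <= k)%N -> `|u k - a| < `|u K - a|.
  by apply: ua; rewrite normr_gt0.
by have := uN (K + N)%N (leq_addl _ _); rewrite uK ltxx.
Qed.

Lemma series_to_eventually_zero (R : realFieldType) (u : nat -> R) K :
  (forall k, (K <= k)%N -> u k = 0) -> series_to u (\sum_(k < K) u k).
Proof.
move=> u0 eps eps_gt0; exists K => n leKn.
rewrite -(subnKC leKn) big_split_ord /=.
rewrite [X in _ + X - _]big1 ?addr0 ?subrr ?normr0 //.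
by move=> i _; apply/u0/leq_addr.
Qed.

Section MapControllerPolys.
Variables (R S : comNzRingType) (f : {rmorphism R -> S}).

Lemma map_NCp s (d : 'I_s.+1 -> R) (d' : 'I_s.+1 -> S) :
  (forall i, f (d i) = d' i) -> map_poly f (NCp d) = NCp d'.
Proof.
move=> fd; rewrite /NCp rmorph_sum; apply: eq_bigr => i _.
by rewrite /= map_polyZ map_polyXn fd.
Qed.

Lemma map_NG (V : eqType) (E : finType) (src tgt : E -> V) v0 v1 delay
    (w : E -> R) (w' : E -> S) :
  (forall e, f (w e) = w' e) ->
  map_poly f (NG src tgt v0 v1 delay w) = NG src tgt v0 v1 delay w'.
Proof.
move=> fw; rewrite /NG rmorph_sum; apply: eq_bigr => dl _.
rewrite /= map_polyZ map_polyXn /gamma rmorph_sum; congr (_ *: _).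
apply: eq_bigr => p _; rewrite /pathW rmorph_prod; apply: eq_bigr => e _.
exact: fw.
Qed.

End MapControllerPolys.

Lemma dw_vec_lshift (R : Type) s (E : finType) (d : 'I_s.+1 -> R) (w : E -> R) i :
  dw_vec d w (lshift #|E| i) = d i.
Proof. by rewrite /dw_vec (unsplitK (inl i : 'I_s.+1 + 'I_#|E|)). Qed.

Lemma dw_vec_rshift (R : Type) s (E : finType) (d : 'I_s.+1 -> R) (w : E -> R) e :
  dw_vec d w (rshift s.+1 (enum_rank e)) = w e.
Proof.
by rewrite /dw_vec (unsplitK (inr (enum_rank e) : 'I_s.+1 + 'I_#|E|)) enum_rankK.
Qed.

Lemma DC_monic (R : comNzRingType) m (c : 'I_m -> R) : DC c \is monic.
Proof.
rewrite /DC monicMl -?polyC1 ?monicXsubC // monicE lead_coefDl ?lead_coefXn //.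
rewrite size_polyXn ltnS; apply: leq_trans (size_sum _ _ _) _.
by apply/bigmax_leqP => i _; rewrite (leq_trans (size_scale_leq _ _)) ?size_polyXn.
Qed.

(* Proved over an abstract field: [field] directly on [{fraction {poly R}}]
   does not finish in reasonable time. *)
Lemma closed_loop_field_identity (K : fieldType)
    (A M DP NP NC DC NGR NGO X XR XO Z : K) :
  M != 0 -> DP != 0 -> DC != 0 -> XR != 0 -> XO != 0 -> X - 1 != 0 -> Z != 0 ->
  DC * DP + NC * NGR * NP * NGO = Z ->
  (M * XR * XO) * (NC / DC) * (NGR / XR) * (NP / (M * DP)) /
  (1 + (M * XR * XO) * (NC / DC) * (NGR / XR) * (NP / (M * DP)) * (NGO / XO))
  * (A * X / (X - 1)) = A * (X * XO * (NC * NGR * NP)) / (Z * (X - 1)).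
Proof.
move=> nzM nzDP nzDC nzXR nzXO nzX1 + hZ; rewrite -{}hZ => nzZ.
by field; rewrite nzM nzDP nzDC nzXR nzXO nzX1 nzZ.
Qed.

Lemma closed_loop_Y_deadbeat (R : idomainType) (A : R)
    (NP M DPp NC DCp NGR NGO Z : {poly R}) (DR DO : nat) :
  M != 0 -> DPp != 0 -> DCp != 0 -> Z != 0 ->
  DCp * DPp + NC * NGR * NP * NGO = Z ->
  closed_loop_Y A NP M DPp NC DCp NGR NGO DR DO =
    (A *: ('X^(DO.+1) * (NC * NGR * NP)))%:F / (Z * ('X - 1))%:F.
Proof.
move=> nzM nzDP nzDC nzZ hZ.
have nzX k : ('X^k : {poly R}) != 0 by rewrite monic_neq0 ?monicXn.
have nzX1 : ('X - 1 : {poly R}) != 0 by rewrite -polyC1 monic_neq0 ?monicXsubC.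
rewrite /closed_loop_Y -!mul_polyC !tofracM tofracB tofrac1 (exprS _ DO) !tofracM.
apply: closed_loop_field_identity; rewrite ?tofrac_eq0 ?nzX ?nzDC ?nzM ?nzDP ?nzZ //.
- by rewrite -tofrac1 -tofracB tofrac_eq0.
- by rewrite -!tofracM -tofracD hZ.
Qed.

Theorem proposition1
  (R : realType) (n r m s : nat) (A : R)
  (NP M DPp : {poly R})
  (hNP : (size NP <= n)%N)
  (hM : M \is monic)
  (hDPp : DPp \is monic) (hDPsz : size DPp = r.+1)
  (hn : (r + degp M)%N = n)
  (VR ER : finType) (srcR tgtR : ER -> VR) (vc vu : VR) (delR : seq ER -> nat)
  (acycR : acyclic srcR tgtR)
  (VO EO : finType) (srcO tgtO : EO -> VO) (vy vc' : VO) (delO : seq EO -> nat)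
  (acycO : acyclic srcO tgtO)
  (hm : (m + 1 = s + degp M + Dbar srcR tgtR vc vu delR + Dbar srcO tgtO vy vc' delO)%N) :
  exists Q : {mpoly R[s.+1 + #|ER|]},
    forall (c : 'I_m -> R) (d : 'I_s.+1 -> R) (wR : ER -> R) (wO : EO -> R)
           (y : nat -> R),
      let NGR := NG srcR tgtR vc vu delR wR in
      let NGO := NG srcO tgtO vy vc' delO wO in
      DC c * DPp + NCp d * NGR * NP * NGO = 'X^(m + r + 1) ->
      zinv (closed_loop_Y A NP M DPp (NCp d) (DC c) NGR NGO
              (Dbar srcR tgtR vc vu delR) (Dbar srcO tgtO vy vc' delO)) y ->
      seq_cvg_to (fun k => y k - A) 0 ->
      series_to (fun k => (y k - A) ^+ 2) (Q.@[dw_vec d wR]).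
Proof.
set DR := Dbar srcR tgtR vc vu delR; set DO := Dbar srcO tgtO vy vc' delO.
set l := (m + r + 1)%N.
pose Nm : {poly {mpoly R[s.+1 + #|ER|]}} :=
  A%:MP *: ('X^(DO.+1) * (NCp (fun i => 'X_(lshift #|ER| i))
    * NG srcR tgtR vc vu delR (fun e => 'X_(rshift s.+1 (enum_rank e)))
    * map_poly (fun a => a%:MP) NP)).
pose Q := \sum_(k < l.+1)
  (\sum_(j < k.+1) Defs.coefZ Nm (l.+1%:Z - j%:Z) - A%:MP) ^+ 2.
exists Q => c d wR wO y NGR NGO deadbeat zinvY cvgE.
set v := dw_vec d wR.
have eval_Nm : map_poly (meval v) Nm = A *: ('X^(DO.+1) * (NCp d * NGR * NP)).
  rewrite map_polyZ /= mevalC !rmorphM /= map_polyXn -map_poly_comp.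
  rewrite (map_NCp _ (d' := d)) => [|i]; last first.
    by rewrite /= mevalXU /v dw_vec_lshift.
  rewrite (map_NG _ _ _ _ _ _ (w' := wR)) => [|e]; last first.
    by rewrite /= mevalXU /v dw_vec_rshift.
  by rewrite map_poly_id // => a _ /=; rewrite mevalC.
rewrite (closed_loop_Y_deadbeat A DR DO (monic_neq0 hM) (monic_neq0 hDPp)
  (monic_neq0 (DC_monic c)) (monic_neq0 (monicXn _ _)) deadbeat) in zinvY.
have y_settled := zinv_deadbeat_settled zinvY.
have yA : y l.+1 = A.
  apply/eqP; rewrite -subr_eq0; apply/eqP.
  by apply: (seq_cvg_to_eventually_const _ cvgE) => t; rewrite y_settled.
have -> : Q.@[v] = \sum_(k < l.+1) (y k - A) ^+ 2.
  rewrite rmorph_sum; apply: eq_bigr => k _.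
  rewrite rmorphXn rmorphB /= mevalC (zinv_deadbeat zinvY) rmorph_sum.
  by congr ((_ - _) ^+ 2); apply: eq_bigr => j _; rewrite /= -coefZ_map eval_Nm.
apply: series_to_eventually_zero => k lek.
by rewrite -(subnKC lek) y_settled yA subrr expr0n.
Qed.
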